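(* Let $n\geq1$ and $\sigma\in\mathfrak{S}_n$. For every packed word $f$ with $\mathrm{Std}(f)=\sigma$ one has $M(f)\subseteq M(\sigma)$, and the map $$\phi_\sigma:\{f\text{ packed word}\mid\mathrm{Std}(f)=\sigma\}\longrightarrow\{I\mid I\subseteq M(\sigma)\},\qquad f\longmapsto M(f),$$ is bijective.
   Context: $[n]=\{1,\ldots,n\}$. A packed word of length $n$ is a word $f=f(1)\ldots f(n)$ of positive integers with $\{f(1),\ldots,f(n)\}=[\max f]$; $\mathfrak{S}_n$ is the set of permutations of $[n]$, viewed as packed words $\sigma(1)\ldots\sigma(n)$. The standardization $\mathrm{Std}(f)$ of a packed word $f$ of length $n$ is the unique $\sigma\in\mathfrak{S}_n$ such that for all $i,j$: $f(i)<f(j)\Rightarrow\sigma(i)<\sigma(j)$, and ($f(i)=f(j)$ and $i<j$) $\Rightarrow\sigma(i)<\sigma(j)$. For a packed word $f$ of length $n$, $M(f)$ is the set of $i\in[n]$ such that: $f(i)<\max f$; for all $j\in[n]$, $f(j)=f(i)\Rightarrow j\leq i$; and for all $j\in[n]$, $f(j)=f(i)+1\Rightarrow j>i$. *)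

From mathcomp Require Import all_boot.
Set Implicit Arguments. Unset Strict Implicit. Unset Printing Implicit Defensive.

(* Words of length n are finite functions 'I_n -> nat; position i : 'I_n
   stands for the paper's position i+1 in [n]. *)
Definition word (n : nat) := {ffun 'I_n -> nat}.

Definition wmax n (f : word n) : nat := \max_(i : 'I_n) f i.

Definition packed n (f : word n) : Prop :=
  forall k : nat, [exists i : 'I_n, f i == k] = (0 < k <= wmax f).

Definition is_perm_word n (s : word n) : Prop :=
  injective s /\ forall i : 'I_n, 0 < s i <= n.

(* Std(f) = s, via the defining property of the standardization *)
Definition is_std n (f s : word n) : Prop :=
  is_perm_word s /\
  (forall i j : 'I_n, f i < f j -> s i < s j) /\
  (forall i j : 'I_n, f i = f j -> i < j -> s i < s j).

Definition Mset n (f : word n) : {set 'I_n} :=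
  [set i : 'I_n | [&& f i < wmax f,
                     [forall j : 'I_n, (f j == f i) ==> (j <= i)] &
                     [forall j : 'I_n, (f j == (f i).+1) ==> (i < j)]]].

From mathcomp Require Import all_boot zify.
Set Implicit Arguments.

(* Read f along the chain s^-1(1), s^-1(2), ..., s^-1(n).  When Std(f) = s,
   f increases along this chain by 0 or 1 at each step, and it jumps from
   i = s^-1(k) to j = s^-1(k+1) exactly when i \in M(f) or j < i.  Moreover
   i \in M(f) iff f jumps there and i < j; taking f = s gives
   M(s) = {i | i < s^-1(s(i)+1)}, hence M(f) \subset M(s).  As the jumps determine f,
   f |-> M(f) is injective; for surjectivity, given I \subset M(s) put a
   jump at every i \in I and at every descent j < i of the chain. *)

Lemma perm_word_onto n (s : word n) : is_perm_word s ->
  forall k, 0 < k <= n -> exists i, s i = k.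
Proof.
move=> [s_inj s_rng] k /andP[k_gt0 k_le].
have pred_lt (i : 'I_n) : (s i).-1 < n.
  by case/andP: (s_rng i) => s_gt0 s_le; rewrite prednK.
pose t (i : 'I_n) : 'I_n := Ordinal (pred_lt i).
have t_inj : injective t.
  move=> i j /(congr1 val) /= e; apply: s_inj.
  by rewrite -(prednK (proj1 (andP (s_rng i)))) -(prednK (proj1 (andP (s_rng j)))) e.
have k_lt : k.-1 < n by rewrite prednK.
case/codomP: (injF_onto t_inj (Ordinal k_lt)) => i /(congr1 val) /= e.
by exists i; rewrite -(prednK (proj1 (andP (s_rng i)))) -e prednK.
Qed.

Lemma wmax_ge n (f : word n) i : f i <= wmax f.
Proof. exact: leq_bigmax. Qed.

Section Standardized.
Variables (n : nat) (s f : word n).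
Hypotheses (f_packed : packed f) (f_std : is_std f s).

Lemma std_mono i j : s i <= s j -> f i <= f j.
Proof.
case: f_std => _ [lt_std _] s_le; rewrite leqNgt; apply/negP => /lt_std; lia.
Qed.

Lemma packed_gt0 i : 0 < f i.
Proof.
have := f_packed (f i).
have -> : [exists k, f k == f i] by apply/existsP; exists i.
by case/esym/andP.
Qed.

Lemma packed_attained v : 0 < v <= wmax f -> exists k, f k = v.
Proof. by rewrite -f_packed => /existsP[k /eqP]; exists k. Qed.

Lemma std_succ_step {i j} : s j = (s i).+1 -> f i <= f j <= (f i).+1.
Proof.
move=> e; apply/andP; split; first by apply: std_mono; rewrite e.
rewrite leqNgt; apply/negP => f_jump.
have [k fk] : exists k, f k = (f i).+1.
  by apply: packed_attained; apply/andP; split => //; apply: leq_trans (wmax_ge f j); lia.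
case: f_std => _ [lt_std _].
have : s i < s k by apply: lt_std; lia.
by rewrite -e => /std_mono; lia.
Qed.

Lemma std_succ_flat {i j} : s j = (s i).+1 -> f j = f i -> i < j.
Proof.
move=> e fe; case: f_std => _ [_ eq_std].
rewrite ltnNge leq_eqVlt; apply/negP => /orP[/eqP/val_inj ji | ji].
  by move: e; rewrite ji; lia.
by have := eq_std _ _ fe ji; lia.
Qed.

Lemma mem_Mset_succ {i j} : s j = (s i).+1 ->
  (i \in Mset f) = (f j == (f i).+1) && (i < j).
Proof.
move=> e; case: f_std => _ [_ eq_std].
have /andP[fij fji] := std_succ_step e.
rewrite inE; apply/idP/idP.
  case/and3P => _ /forallP last_i /forallP first_succ.
  have fj : f j = (f i).+1.
    have [fe|] := eqVneq (f j) (f i); last lia.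
    have := last_i j; rewrite fe eqxx /= => ji.
    have := std_succ_flat e fe; lia.
  by rewrite fj eqxx /=; have := first_succ j; rewrite fj eqxx.
case/andP => /eqP fj ij; apply/and3P; split.
- by apply: leq_trans (wmax_ge f j); rewrite fj.
- apply/forallP => k; apply/implyP => /eqP fk; rewrite leqNgt; apply/negP => ik.
  have := eq_std _ _ (esym fk) ik; rewrite -ltnS -e => /std_mono; lia.
- apply/forallP => k; apply/implyP => /eqP fk; rewrite ltnNge; apply/negP => ki.
  have := eq_std k j (etrans fk (esym fj)) (leq_ltn_trans ki ij).
  by rewrite e ltnS => /std_mono; lia.
Qed.

Lemma std_succ_jump {i j} : s j = (s i).+1 ->
  f j = f i + ((i \in Mset f) || (j < i)).
Proof.
move=> e; rewrite (mem_Mset_succ e); have /andP[fij fji] := std_succ_step e.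
case: (ltngtP i j) => ij.
- rewrite andbT orbF; case: eqP => // fne; lia.
- rewrite andbF /=; case: (f j =P f i) => fe; last lia.
  by have := std_succ_flat e fe; lia.
- by move/val_inj: ij e => ->; lia.
Qed.

Lemma std_first {i} : s i = 1 -> f i = 1.
Proof.
case: f_std => -[_ s_rng] _ e.
have [k fk] : exists k, f k = 1.
  by apply: packed_attained; have := packed_gt0 i; have := wmax_ge f i; lia.
have := packed_gt0 i; have : f i <= f k by apply: std_mono; rewrite e; case/andP: (s_rng k).
lia.
Qed.

Lemma Mset_std_last {i} : s i = n -> i \notin Mset f.
Proof.
case: f_std => -[_ s_rng] _ e.
rewrite inE negb_and -leqNgt; apply/orP; left.
by apply/bigmax_leqP => k _; apply: std_mono; rewrite e; case/andP: (s_rng k).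
Qed.

End Standardized.

Lemma packed_of_steps n (s f : word n) : 1 <= n -> is_perm_word s ->
  (forall i, s i = 1 -> f i = 1) ->
  (forall i j, s i <= s j -> f i <= f j) ->
  (forall i j, s j = (s i).+1 -> f j <= (f i).+1) -> packed f.
Proof.
move=> n_gt0 s_perm f_first f_mono f_step.
have s_onto := perm_word_onto s_perm; have [_ s_rng] := s_perm.
have below d i : s i = d.+1 -> forall v, 0 < v <= f i -> exists k, f k = v.
  elim: d i => [|d IH] i e v v_rng.
    by exists i; move: v_rng; rewrite f_first //; lia.
  have [i0 e0] : exists i0, s i0 = d.+1 by apply: s_onto; have := s_rng i; lia.
  have := f_step i0 i; rewrite e e0 => /(_ erefl) fi.
  case: (leqP v (f i0)) => v_le; first by apply: (IH i0 e0); lia.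
  by exists i; lia.
have [t et] : exists t, s t = n by apply: s_onto; lia.
have [b eb] : exists b, s b = 1 by apply: s_onto; lia.
have wmax_t : wmax f = f t.
  apply/eqP; rewrite eqn_leq wmax_ge andbT.
  by apply/bigmax_leqP => k _; apply: f_mono; rewrite et; have := s_rng k; lia.
move=> k; rewrite wmax_t; apply/idP/idP.
  case/existsP => i /eqP <-; apply/andP; split.
    by rewrite -(f_first b eb); apply: f_mono; rewrite eb; have := s_rng i; lia.
  by apply: f_mono; rewrite et; have := s_rng i; lia.
move=> k_rng; have et' : s t = n.-1.+1 by rewrite prednK.
have [k' fk] := below _ t et' k k_rng.
by apply/existsP; exists k'; rewrite fk.
Qed.

Section PermWord.
Variables (n : nat) (s : word n).
Hypotheses (n_gt0 : 1 <= n) (s_perm : is_perm_word s).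

Lemma perm_word_packed : packed s.
Proof. by apply: (packed_of_steps s n_gt0 s_perm) => // i j ->. Qed.

Lemma perm_word_std : is_std s s.
Proof.
have [s_inj _] := s_perm.
by split => //; split => // i j /s_inj ->; rewrite ltnn.
Qed.

Lemma exists_succ {i} : s i < n -> exists j, s j = (s i).+1.
Proof. by move=> lt; apply: (perm_word_onto s_perm); rewrite // ltn0Sn. Qed.

Lemma Mset_std_sub (f : word n) : packed f -> is_std f s -> Mset f \subset Mset s.
Proof.
move=> f_packed f_std; apply/subsetP => i iM; have [_ s_rng] := s_perm.
case: (ltngtP (s i) n) => i_lt; last by rewrite (negbTE (Mset_std_last f_std i_lt)) in iM.
  have [j ej] := exists_succ i_lt.
  move: iM; rewrite (mem_Mset_succ f_packed f_std ej).
  rewrite (mem_Mset_succ perm_word_packed perm_word_std ej) ej eqxx.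
  by case/andP.
by have := s_rng i; lia.
Qed.

Lemma std_inj_Mset (f g : word n) : packed f -> is_std f s -> packed g -> is_std g s ->
  Mset f = Mset g -> f = g.
Proof.
move=> f_packed f_std g_packed g_std eM; have [_ s_rng] := s_perm.
suff eq_at d i : s i = d.+1 -> f i = g i.
  by apply/ffunP => i; apply: (eq_at (s i).-1); rewrite prednK //; case/andP: (s_rng i).
elim: d i => [|d IH] i e; first by rewrite (std_first f_packed f_std e) (std_first g_packed g_std e).
have [i0 e0] : exists i0, s i0 = d.+1 by apply: (perm_word_onto s_perm); have := s_rng i; lia.
have e' : s i = (s i0).+1 by rewrite e e0.
by rewrite (std_succ_jump f_packed f_std e') (std_succ_jump g_packed g_std e') eM (IH _ e0).
Qed.

End PermWord.

(* [jumps s I j]: the word built below increases right after position j in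
   the chain of s. *)
Definition jumps n (s : word n) (I : {set 'I_n}) (j : 'I_n) : bool :=
  (j \in I) || [exists j', (s j' == (s j).+1) && (j' < j)].

Definition word_of_jumps n (s : word n) (I : {set 'I_n}) : word n :=
  [ffun i => #|[set j | (s j < s i) && jumps s I j]|.+1].

Section WordOfJumps.
Variables (n : nat) (s : word n) (I : {set 'I_n}).
Hypotheses (n_gt0 : 1 <= n) (s_perm : is_perm_word s).
Local Notation fI := (word_of_jumps s I).

Lemma jumps_succ {i j} : s j = (s i).+1 -> jumps s I i = (i \in I) || (j < i).
Proof.
have [s_inj _] := s_perm; move=> e; congr (_ || _); apply/existsP/idP.
  by case=> j' /andP[/eqP e' ji]; rewrite -(s_inj _ _ (etrans e' (esym e))).
by move=> ji; exists j; rewrite e eqxx.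
Qed.

Lemma word_of_jumps_mono i j : s i <= s j -> fI i <= fI j.
Proof.
move=> s_le; rewrite !ffunE ltnS; apply: subset_leq_card.
apply/subsetP => k; rewrite !inE => /andP[k_lt ->]; rewrite andbT.
exact: leq_trans k_lt s_le.
Qed.

Lemma word_of_jumps_succ {i j} : s j = (s i).+1 -> fI j = fI i + jumps s I i.
Proof.
move=> e; have [s_inj _] := s_perm; rewrite !ffunE.
have -> : [set k | (s k < s j) && jumps s I k] =
    [set k | (s k < s i) && jumps s I k] :|: (if jumps s I i then [set i] else set0).
  apply/setP => k; rewrite !inE e ltnS leq_eqVlt.
  case: (s k =P s i) => [/s_inj -> | ne] /=.
    by case: (jumps s I i); rewrite ?inE ?eqxx ?ltnn.
  have kni : (k == i) = false by apply/eqP => ki; apply: ne; rewrite ki.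
  by case: (jumps s I i); rewrite ?inE ?kni ?orbF.
case: (jumps s I i); last by rewrite setU0 addn0.
by rewrite setUC cardsU1 inE ltnn /= add1n addn1.
Qed.

Lemma word_of_jumps_first {i} : s i = 1 -> fI i = 1.
Proof.
move=> e; have [_ s_rng] := s_perm; rewrite ffunE.
suff -> : [set j | (s j < s i) && jumps s I j] = set0 by rewrite cards0.
by apply/setP => k; rewrite !inE e; have := s_rng k; case: (s k).
Qed.

Lemma word_of_jumps_packed : packed fI.
Proof.
have step i j : s j = (s i).+1 -> fI j <= (fI i).+1.
  by move/word_of_jumps_succ ->; case: jumps; rewrite ?addn1 ?addn0.
exact: (packed_of_steps fI n_gt0 s_perm (@word_of_jumps_first) word_of_jumps_mono step).
Qed.

Lemma word_of_jumps_flat {i j} : s j < s i -> fI i = fI j ->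
  forall k, s j <= s k < s i -> ~~ jumps s I k.
Proof.
move=> s_lt fe k /andP[jk ki].
have sub : [set x | (s x < s j) && jumps s I x] \subset [set x | (s x < s i) && jumps s I x].
  by apply/subsetP => x; rewrite !inE => /andP[x_lt ->]; rewrite andbT (ltn_trans x_lt).
move: fe; rewrite !ffunE => -[/esym/eqP fe].
have [_ /esym] := subset_leqif_card sub; rewrite fe => /subsetP /(_ k).
by rewrite !inE ki /=; case: (jumps s I k) => //; move/(_ isT); lia.
Qed.

(* Without a jump between them, the chain never steps left, so
   s j < s i forces j < i. *)
Lemma word_of_jumps_std : is_std fI s.
Proof.
have [s_inj s_rng] := s_perm.
split => //; split.
  by move=> i j f_lt; rewrite ltnNge; apply/negP => /word_of_jumps_mono; lia.
move=> i j fe ij; case: (ltngtP (s i) (s j)) => // s_lt; last first.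
  by move: ij; rewrite (s_inj _ _ s_lt) ltnn.
have no_jump := word_of_jumps_flat s_lt fe.
have walk d : s j + d <= s i -> exists k, s k = s j + d /\ j <= k.
  elim: d => [|d IH] le; first by exists j; rewrite addn0.
  rewrite addnS in le; have [k [ek jk]] := IH (ltnW le).
  have [k' ek'] : exists k', s k' = (s k).+1 by apply: (perm_word_onto s_perm); have := s_rng i; lia.
  exists k'; split; first by rewrite ek' ek addnS.
  have : ~~ jumps s I k by apply: no_jump; rewrite ek; lia.
  rewrite (jumps_succ ek') negb_or -leqNgt => /andP[_ kk].
  exact: leq_trans jk kk.
have [k [ek jk]] : exists k, s k = s j + (s i - s j) /\ j <= k by apply: walk; lia.
have ki : k = i by apply: s_inj; rewrite ek; lia.
by move: jk; rewrite ki; lia.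
Qed.

Lemma Mset_word_of_jumps : I \subset Mset s -> Mset fI = I.
Proof.
move=> IM; have [_ s_rng] := s_perm.
have f_packed := word_of_jumps_packed; have f_std := word_of_jumps_std.
apply/setP => i; case: (ltngtP (s i) n) => i_lt; last first.
- rewrite (negbTE (Mset_std_last f_std i_lt)); apply/esym/negP => iI.
  by have := Mset_std_last (perm_word_std s_perm) i_lt; rewrite (subsetP IM _ iI).
- by have := s_rng i; lia.
have [j ej] := exists_succ s_perm i_lt.
rewrite (mem_Mset_succ f_packed f_std ej) (word_of_jumps_succ ej) (jumps_succ ej).
case iI: (i \in I) => /=.
  have := subsetP IM _ iI; rewrite (mem_Mset_succ (perm_word_packed n_gt0 s_perm) (perm_word_std s_perm) ej) => /andP[_ ->].
  by rewrite addn1 eqxx.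
by case: ltngtP; rewrite ?addn1 ?addn0 ?eqxx //=; lia.
Qed.

End WordOfJumps.

Theorem lemma25 (n : nat) (s : word n) :
  1 <= n -> is_perm_word s ->
  (forall f : word n, packed f -> is_std f s -> Mset f \subset Mset s) /\
  (forall f g : word n, packed f -> is_std f s -> packed g -> is_std g s ->
      Mset f = Mset g -> f = g) /\
  (forall I : {set 'I_n}, I \subset Mset s ->
      exists f : word n, [/\ packed f, is_std f s & Mset f = I]).
Proof.
move=> n_gt0 s_perm; split; first exact: Mset_std_sub.
split; first exact: std_inj_Mset.
move=> I IM; exists (word_of_jumps s I); split.
- exact: word_of_jumps_packed.
- exact: word_of_jumps_std.
- exact: Mset_word_of_jumps.
Qed.
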